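(* Let $G$ be a simple graph and $v_0\in V(G)$ with $N_G(v_0)=\{u_1,u_2\}$ ($u_1\ne u_2$). (i) Suppose $u_1u_2\in E(G)$, let $G'=G-u_1u_2-v_0$ and $g\in\mathrm{SEDF}^0(G')$. Define $f:E(G)\to\{1,-1\}$ by $f(e)=g(e)$ for $e\in E(G')$, $f(v_0u_i)=1$ for $i=1,2$, and $f(u_1u_2)=-1$. Then $f\in\mathrm{SEDF}^0(G)$ and $f(G)=g(G')+1$. (ii) Suppose $u_1u_2\notin E(G)$, let $G'=G+u_1u_2-v_0$ and $g\in\mathrm{SEDF}^0(G')$. Define $f:E(G)\to\{1,-1\}$ by $f(e)=g(e)$ for $e\in E(G')\setminus\{u_1u_2\}$, $f(u_1v_0)=1$, and $f(u_2v_0)=g(u_1u_2)$. Then $f\in\mathrm{SEDF}^0(G)$ and $f(G)=g(G')+1$.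
   Context: For a graph $H$ and $f:E(H)\to\{1,-1\}$, $f(H)=\sum_{e\in E(H)}f(e)$ and $f(v)=\sum_{e\in E_H(v)}f(e)$, where $E_H(v)$ is the set of edges of $H$ incident with $v$. $\mathrm{SEDF}^0(H)$ is the set of functions $f:E(H)\to\{1,-1\}$ such that (a) $f(v)\ge 0$ for all $v\in V(H)$, and (b) $f(u)+f(v)\ge 2$ for every edge $uv$ with $f(uv)=1$. $G-u_1u_2-v_0$ is obtained by deleting the edge $u_1u_2$ and the vertex $v_0$; $G+u_1u_2-v_0$ by adding the edge $u_1u_2$ and deleting $v_0$. *)

From mathcomp Require Import all_boot all_order all_algebra.
Set Implicit Arguments. Unset Strict Implicit. Unset Printing Implicit Defensive.
Import Order.TTheory GRing.Theory Num.Theory.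
Local Open Scope ring_scope.

Definition simple_graph (T : finType) (V : {set T}) (E : {set {set T}}) : Prop :=
  forall e, e \in E -> e \subset V /\ #|e| = 2%N.

Definition fsum (T : finType) (E : {set {set T}}) (f : {set T} -> int) : int :=
  \sum_(e in E) f e.

Definition fvert (T : finType) (E : {set {set T}}) (f : {set T} -> int) (v : T) : int :=
  \sum_(e in E | v \in e) f e.

Definition SEDF0 (T : finType) (V : {set T}) (E : {set {set T}}) (f : {set T} -> int) : Prop :=
  [/\ (forall e, e \in E -> f e = 1 \/ f e = -1),
      (forall v, v \in V -> 0 <= fvert E f v) &
      (forall u v, [set u; v] \in E -> u != v -> f [set u; v] = 1 ->
                   2 <= fvert E f u + fvert E f v)].

Definition nbhd (T : finType) (E : {set {set T}}) (v : T) : {set T} :=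
  [set u | [set v; u] \in E].

(* Deleting v0 only affects the edge sums at u1, u2 and v0.  In case (i) the
   new edges v0u1, v0u2 get 1 and u1u2 gets -1, so f(x) = g(x) for x <> v0
   and f(v0) = 2.  In case (ii) the edge u1u2 of G' is subdivided by v0:
   v0u2 inherits the value of u1u2 and v0u1 gets 1, so f(x) = g(x) except
   f(u1) = g(u1) + 1 - g(u1u2) >= g(u1), and f(v0) = 1 + g(u1u2).  Hence
   f(x) >= g(x) off v0, which transfers (a) and (b) from g along the edges
   avoiding v0, and the two edges at v0 are checked by hand. *)

From mathcomp Require Import all_boot all_order all_algebra.
From mathcomp Require Import zify.

Set Implicit Arguments.
Unset Strict Implicit.
Unset Printing Implicit Defensive.

Import Order.TTheory GRing.Theory Num.Theory.
Local Open Scope ring_scope.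

Section EdgeSums.
Variable T : finType.
Implicit Types (A : {set {set T}}) (f g : {set T} -> int).

Lemma fvertU1 A a f v :
  a \notin A -> fvert (a |: A) f v = (if v \in a then f a else 0) + fvert A f v.
Proof. by move=> aA; rewrite /fvert big_mkcondr big_setU1 //= -big_mkcondr. Qed.

Lemma fsumU1 A a f : a \notin A -> fsum (a |: A) f = f a + fsum A f.
Proof. exact: big_setU1. Qed.

Lemma eq_in_fvert A f g v : {in A, f =1 g} -> fvert A f v = fvert A g v.
Proof. by move=> fg; apply: eq_bigr => e /andP[eA _]; apply: fg. Qed.

Lemma eq_in_fsum A f g : {in A, f =1 g} -> fsum A f = fsum A g.
Proof. exact: eq_bigr. Qed.

Lemma fvert_eq0 A f (v : T) : (forall e, e \in A -> v \notin e) -> fvert A f v = 0.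
Proof. by move=> vA; rewrite /fvert big1 // => e /andP[/vA/negP]. Qed.

End EdgeSums.

Lemma SEDF0_vertex_extension (T : finType) (V : {set T}) (E E' : {set {set T}})
    (v0 : T) (f g : {set T} -> int) :
  SEDF0 (V :\ v0) E' g ->
  (forall e, e \in E -> f e = 1 \/ f e = -1) ->
  (forall x, x != v0 -> fvert E' g x <= fvert E f x) ->
  0 <= fvert E f v0 ->
  (forall e, e \in E -> v0 \notin e -> f e = 1 -> e \in E' /\ g e = 1) ->
  (forall w, [set v0; w] \in E -> f [set v0; w] = 1 ->
     2 <= fvert E f v0 + fvert E f w) ->
  SEDF0 V E f.
Proof.
move=> [_ g_ge0 g_edge] f_sign f_ge_g f_v0_ge0 f_off_v0 f_at_v0; split=> //.
  move=> x xV; case: (eqVneq x v0) => [-> // | xv0].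
  by apply: le_trans (f_ge_g x xv0); apply: g_ge0; rewrite in_setD1 xv0.
move=> u v uvE uv fuv.
case: (eqVneq u v0) => [uv0 | uv0].
  by rewrite uv0 in uvE fuv *; apply: f_at_v0.
case: (eqVneq v v0) => [vv0 | vv0].
  by rewrite vv0 setUC in uvE fuv *; rewrite addrC; apply: f_at_v0.
have v0uv : v0 \notin [set u; v] by rewrite in_set2 !(eq_sym v0) negb_or uv0 vv0.
have [uvE' guv] := f_off_v0 _ uvE v0uv fuv.
have := g_edge u v uvE' uv guv; have := f_ge_g u uv0; have := f_ge_g v vv0; lia.
Qed.

Section SimpleGraph.
Variables (T : finType) (V : {set T}) (E : {set {set T}}).
Hypothesis simpleE : simple_graph V E.

Lemma edge_neq (x y : T) : [set x; y] \in E -> x != y.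
Proof.
by move=> /simpleE[_]; apply: contra_eqN => /eqP <-; rewrite setUid cards1.
Qed.

Lemma edge_subset_vertices (x y : T) : [set x; y] \in E -> x \in V /\ y \in V.
Proof. by move=> /simpleE[/subsetP sV _]; rewrite !sV ?set21 ?set22. Qed.

Section DegreeTwoVertex.
Variables v0 u1 u2 : T.
Hypotheses (u1_neq_u2 : u1 != u2) (nbhd_v0 : nbhd E v0 = [set u1; u2]).

(* [E0] mentions [E], hence the [{1}] when rewriting with [edges_at_v0]. *)
Local Notation E0 := [set e in E | v0 \notin e].

Lemma edge_v0u1 : [set v0; u1] \in E.
Proof. by have := set21 u1 u2; rewrite -nbhd_v0 inE. Qed.

Lemma edge_v0u2 : [set v0; u2] \in E.
Proof. by have := set22 u1 u2; rewrite -nbhd_v0 inE. Qed.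

Lemma u1_neq_v0 : u1 != v0.
Proof. by rewrite eq_sym; apply: edge_neq edge_v0u1. Qed.

Lemma u2_neq_v0 : u2 != v0.
Proof. by rewrite eq_sym; apply: edge_neq edge_v0u2. Qed.

Lemma v0_notin_u1u2 : v0 \notin [set u1; u2].
Proof. by rewrite in_set2 negb_or !(eq_sym v0) u1_neq_v0 u2_neq_v0. Qed.

Lemma edge_at_v0 e : e \in E -> v0 \in e ->
  (e == [set v0; u1]) || (e == [set v0; u2]).
Proof.
move=> eE; have [_ /eqP/cards2P[x [y [_ exy]]]] := simpleE eE.
have nb w : [set v0; w] \in E ->
    ([set v0; w] == [set v0; u1]) || ([set v0; w] == [set v0; u2]).
  move=> wE; have : w \in nbhd E v0 by rewrite inE.
  by rewrite nbhd_v0 in_set2 => /orP[]/eqP->; rewrite eqxx ?orbT.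
rewrite exy in_set2 => /orP[]/eqP xy; first by rewrite -xy nb // xy -exy.
by rewrite -xy setUC nb // setUC xy -exy.
Qed.

Lemma edges_at_v0 : E = [set v0; u1] |: ([set v0; u2] |: E0).
Proof.
apply/setP => e; rewrite !in_setU1 inE; apply/idP/idP => [eE|].
  by case v0e: (v0 \in e); [rewrite orbA (edge_at_v0 eE v0e) | rewrite eE !orbT].
by case/or3P => [/eqP-> | /eqP-> | /andP[]]; rewrite ?edge_v0u1 ?edge_v0u2.
Qed.

Lemma fvert_E0_v0 h : fvert E0 h v0 = 0.
Proof. by apply: fvert_eq0 => e; rewrite inE => /andP[]. Qed.

Lemma edge_v0u2_notin : [set v0; u2] \notin E0.
Proof. by rewrite inE set21 andbF. Qed.

Lemma edge_v0u1_notin : [set v0; u1] \notin [set v0; u2] |: E0.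
Proof.
rewrite in_setU1 inE set21 andbF orbF.
apply: contraNN u1_neq_u2 => /eqP e12.
by have := set22 v0 u1; rewrite e12 in_set2 (negbTE u1_neq_v0).
Qed.

Lemma fvert_degree2 h x : fvert E h x =
  (if x \in [set v0; u1] then h [set v0; u1] else 0) +
  (if x \in [set v0; u2] then h [set v0; u2] else 0) + fvert E0 h x.
Proof.
by rewrite {1}edges_at_v0 !fvertU1 ?edge_v0u1_notin ?edge_v0u2_notin // addrA.
Qed.

Lemma fsum_degree2 h :
  fsum E h = h [set v0; u1] + h [set v0; u2] + fsum E0 h.
Proof.
by rewrite {1}edges_at_v0 !fsumU1 ?edge_v0u1_notin ?edge_v0u2_notin // addrA.
Qed.

Lemma fvert_at_v0 h : fvert E h v0 = h [set v0; u1] + h [set v0; u2].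
Proof. by rewrite fvert_degree2 !set21 fvert_E0_v0 addr0. Qed.

Lemma fvert_off_v0 h x : x != v0 -> fvert E h x =
  (if x == u1 then h [set v0; u1] else 0) +
  (if x == u2 then h [set v0; u2] else 0) + fvert E0 h x.
Proof. by move=> xv0; rewrite fvert_degree2 !in_set2 (negbTE xv0). Qed.

Section TriangleCase.
Hypothesis u1u2_E : [set u1; u2] \in E.
Variable g : {set T} -> int.
Local Notation E' := (E0 :\ [set u1; u2]).
Hypothesis g_SEDF0 : SEDF0 (V :\ v0) E' g.

Definition triangle_lift e : int :=
  if (e == [set v0; u1]) || (e == [set v0; u2]) then 1
  else if e == [set u1; u2] then -1 else g e.

Lemma triangle_edges : E0 = [set u1; u2] |: E'.
Proof. by rewrite setD1K // inE u1u2_E v0_notin_u1u2. Qed.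

Lemma triangle_lift_u1u2 : triangle_lift [set u1; u2] = -1.
Proof.
rewrite /triangle_lift eqxx ifF //; apply/negP => /orP[]/eqP e12;
  by move: v0_notin_u1u2; rewrite e12 set21.
Qed.

Lemma triangle_lift_eq : {in E', triangle_lift =1 g}.
Proof.
move=> e; rewrite !inE => /andP[ne12 /andP[_ v0e]].
have nv0 w : (e == [set v0; w]) = false.
  by apply: contraNF v0e => /eqP->; rewrite set21.
by rewrite /triangle_lift !nv0 (negbTE ne12).
Qed.

Lemma triangle_lift_v0u1 : triangle_lift [set v0; u1] = 1.
Proof. by rewrite /triangle_lift eqxx. Qed.

Lemma triangle_lift_v0u2 : triangle_lift [set v0; u2] = 1.
Proof. by rewrite /triangle_lift eqxx orbT. Qed.

Lemma fvert_triangle_lift x : x != v0 -> fvert E triangle_lift x = fvert E' g x.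
Proof.
move=> xv0; rewrite fvert_off_v0 // {1}triangle_edges fvertU1 ?setD11 //.
rewrite (eq_in_fvert _ triangle_lift_eq) triangle_lift_v0u1 triangle_lift_v0u2.
rewrite triangle_lift_u1u2 in_set2.
case: (eqVneq x u1) => [->|_]; first by rewrite (negbTE u1_neq_u2) /=; lia.
by case: (x == u2) => /=; lia.
Qed.

Lemma fvert_triangle_lift_v0 : fvert E triangle_lift v0 = 2.
Proof. by rewrite fvert_at_v0 triangle_lift_v0u1 triangle_lift_v0u2. Qed.

Lemma SEDF0_triangle_lift : SEDF0 V E triangle_lift.
Proof.
have [g_sign g_ge0 _] := g_SEDF0.
apply: (SEDF0_vertex_extension g_SEDF0).
- move=> e eE; rewrite /triangle_lift.
  case: ifP => [_|/norP[ne1 ne2]]; first by left.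
  case: ifPn => [_|ne12]; first by right.
  apply: g_sign; move: eE; rewrite {1}edges_at_v0 !in_setU1.
  by rewrite (negbTE ne1) (negbTE ne2) in_setD1 ne12.
- by move=> x xv0; rewrite fvert_triangle_lift.
- by rewrite fvert_triangle_lift_v0.
- move=> e eE v0e fe; have eE0 : e \in E0 by rewrite inE eE v0e.
  have eE' : e \in E'.
    rewrite in_setD1 eE0 andbT; apply: contra_eqN fe => /eqP->.
    by rewrite triangle_lift_u1u2.
  by rewrite -triangle_lift_eq.
- move=> w wE _; have wv0 : w != v0 by rewrite eq_sym (edge_neq wE).
  have [_ wV] := edge_subset_vertices wE.
  rewrite fvert_triangle_lift_v0 fvert_triangle_lift // lerDl.
  by apply: g_ge0; rewrite in_setD1 wv0.
Qed.

Lemma fsum_triangle_lift : fsum E triangle_lift = fsum E' g + 1.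
Proof.
rewrite fsum_degree2 {1}triangle_edges fsumU1 ?setD11 //.
rewrite (eq_in_fsum triangle_lift_eq).
by rewrite triangle_lift_v0u1 triangle_lift_v0u2 triangle_lift_u1u2; lia.
Qed.

End TriangleCase.

Section SubdivisionCase.
Hypothesis u1u2_notin_E : [set u1; u2] \notin E.
Variable g : {set T} -> int.
Local Notation E' := (E0 :|: [set [set u1; u2]]).
Hypothesis g_SEDF0 : SEDF0 (V :\ v0) E' g.

Definition subdivision_lift e : int :=
  if e == [set u1; v0] then 1
  else if e == [set u2; v0] then g [set u1; u2] else g e.

Lemma subdivision_edges : E' = [set u1; u2] |: E0.
Proof. exact: setUC. Qed.

Lemma u1u2_notin_E0 : [set u1; u2] \notin E0.
Proof. by rewrite inE (negbTE u1u2_notin_E). Qed.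

Lemma g_u1u2_sign : g [set u1; u2] = 1 \/ g [set u1; u2] = -1.
Proof.
have [g_sign _ _] := g_SEDF0.
by apply: g_sign; rewrite subdivision_edges setU11.
Qed.

Lemma subdivision_lift_eq : {in E0, subdivision_lift =1 g}.
Proof.
move=> e; rewrite inE => /andP[_ v0e].
have nv0 w : (e == [set w; v0]) = false.
  by apply: contraNF v0e => /eqP->; rewrite set22.
by rewrite /subdivision_lift !nv0.
Qed.

Lemma subdivision_lift_v0u1 : subdivision_lift [set v0; u1] = 1.
Proof. by rewrite /subdivision_lift setUC eqxx. Qed.

Lemma subdivision_lift_v0u2 : subdivision_lift [set v0; u2] = g [set u1; u2].
Proof.
rewrite /subdivision_lift setUC eqxx ifF //; apply: contraNF u1_neq_u2 => /eqP e21.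
by have := set21 u2 v0; rewrite e21 in_set2 (negbTE u2_neq_v0) orbF eq_sym.
Qed.

Lemma fvert_subdivision_lift x : x != v0 -> fvert E subdivision_lift x =
  fvert E' g x + (if x == u1 then 1 - g [set u1; u2] else 0).
Proof.
move=> xv0; rewrite fvert_off_v0 // subdivision_edges fvertU1 ?u1u2_notin_E0 //.
rewrite (eq_in_fvert _ subdivision_lift_eq).
rewrite subdivision_lift_v0u1 subdivision_lift_v0u2 in_set2.
case: (eqVneq x u1) => [->|_]; first by rewrite (negbTE u1_neq_u2) /=; lia.
by case: (x == u2) => /=; lia.
Qed.

Lemma fvert_subdivision_lift_v0 :
  fvert E subdivision_lift v0 = 1 + g [set u1; u2].
Proof. by rewrite fvert_at_v0 subdivision_lift_v0u1 subdivision_lift_v0u2. Qed.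

Lemma fvert_subdivision_lift_ge x : x != v0 ->
  fvert E' g x <= fvert E subdivision_lift x.
Proof.
move=> xv0; rewrite fvert_subdivision_lift //.
by case: g_u1u2_sign => ->; case: (x == u1); lia.
Qed.

Lemma SEDF0_subdivision_lift : SEDF0 V E subdivision_lift.
Proof.
have [g_sign g_ge0 _] := g_SEDF0.
have E0_E' e : e \in E0 -> e \in E'.
  by rewrite subdivision_edges in_setU1 orbC => ->.
apply: (SEDF0_vertex_extension g_SEDF0).
- move=> e eE; rewrite /subdivision_lift.
  case: ifP => [_|ne1]; first by left.
  case: ifP => [_|ne2]; first exact: g_u1u2_sign.
  apply/g_sign/E0_E'; move: eE; rewrite {1}edges_at_v0 !in_setU1.
  by rewrite ![[set v0; _]]setUC ne1 ne2.
- exact: fvert_subdivision_lift_ge.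
- by rewrite fvert_subdivision_lift_v0; case: g_u1u2_sign => ->.
- move=> e eE v0e fe; have eE0 : e \in E0 by rewrite inE eE v0e.
  by rewrite E0_E' // -subdivision_lift_eq.
- move=> w wE; have : w \in nbhd E v0 by rewrite inE.
  have gu1_ge0 : 0 <= fvert E' g u1.
    have [_ u1V] := edge_subset_vertices edge_v0u1.
    by apply: g_ge0; rewrite in_setD1 u1_neq_v0.
  rewrite nbhd_v0 in_set2 => /orP[]/eqP->.
    rewrite fvert_subdivision_lift_v0 fvert_subdivision_lift ?u1_neq_v0 // eqxx.
    lia.
  rewrite subdivision_lift_v0u2 fvert_subdivision_lift_v0 => ->.
  have [_ u2V] := edge_subset_vertices edge_v0u2.
  have := fvert_subdivision_lift_ge u2_neq_v0.
  have : 0 <= fvert E' g u2 by apply: g_ge0; rewrite in_setD1 u2_neq_v0.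
  lia.
Qed.

Lemma fsum_subdivision_lift : fsum E subdivision_lift = fsum E' g + 1.
Proof.
rewrite fsum_degree2 subdivision_edges fsumU1 ?u1u2_notin_E0 //.
rewrite (eq_in_fsum subdivision_lift_eq) subdivision_lift_v0u1 subdivision_lift_v0u2.
lia.
Qed.

End SubdivisionCase.

End DegreeTwoVertex.

End SimpleGraph.

Theorem lemma2p3 (T : finType) (V : {set T}) (E : {set {set T}})
  (v0 u1 u2 : T) :
  simple_graph V E -> v0 \in V ->
  u1 != u2 -> nbhd E v0 = [set u1; u2] ->
  (* (i) *)
  ([set u1; u2] \in E ->
   forall g : {set T} -> int,
   let V' := V :\ v0 in
   let E' := [set e in E | v0 \notin e] :\ [set u1; u2] in
   SEDF0 V' E' g ->
   let f := fun e : {set T} =>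
     if (e == [set v0; u1]) || (e == [set v0; u2]) then 1
     else if e == [set u1; u2] then -1 else g e in
   SEDF0 V E f /\ fsum E f = fsum E' g + 1) /\
  (* (ii) *)
  ([set u1; u2] \notin E ->
   forall g : {set T} -> int,
   let V' := V :\ v0 in
   let E' := [set e in E | v0 \notin e] :|: [set [set u1; u2]] in
   SEDF0 V' E' g ->
   let f := fun e : {set T} =>
     if e == [set u1; v0] then 1
     else if e == [set u2; v0] then g [set u1; u2] else g e in
   SEDF0 V E f /\ fsum E f = fsum E' g + 1).
Proof.
move=> simpleE _ u1_neq_u2 nbhd_v0; split.
  move=> u1u2_E g V' E' g_SEDF0 f; split.
    exact: (SEDF0_triangle_lift simpleE u1_neq_u2 nbhd_v0 u1u2_E g_SEDF0).
  exact: (fsum_triangle_lift simpleE u1_neq_u2 nbhd_v0 u1u2_E g).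
move=> u1u2_notin_E g V' E' g_SEDF0 f; split.
  exact: (SEDF0_subdivision_lift simpleE u1_neq_u2 nbhd_v0 u1u2_notin_E g_SEDF0).
exact: (fsum_subdivision_lift simpleE u1_neq_u2 nbhd_v0 u1u2_notin_E g).
Qed.
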